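(* Let $p$ be an odd prime, $c\in\mathbb Z_p$ with $c\not\equiv0,\pm1\pmod p$ and $c^2+1\not\equiv0\pmod p$. Then the congruence $x^4-2(c^2+1)x^2+c^2(c^2+1)\equiv0\pmod p$ is solvable if and only if $$\sum_{k=1}^{[p/4]}\binom{4k}{2k}\frac1{(16(c^2+1))^k}\equiv0\pmod p.$$
   Context: $[x]$ is the greatest integer $\le x$; $\mathbb Z_p$ is the set of rational numbers whose denominator is not divisible by $p$. *)

From HB Require Import structures.
From mathcomp Require Import all_boot all_order all_algebra.
Set Implicit Arguments. Unset Strict Implicit. Unset Printing Implicit Defensive.
Import Order.TTheory GRing.Theory Num.Theory.
Local Open Scope ring_scope.

(* a \in Z_p : the reduced denominator of the rational a is not divisible by p. *)
Definition in_Zp_loc (p : nat) (a : rat) : bool := ~~ (p %| `|denq a|)%N.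

(* For a \in Z_p, "a == 0 (mod p)" : p divides the (reduced) numerator of a. *)
Definition cong0 (p : nat) (a : rat) : bool := (p%:Z %| numq a)%Z.

(* Everything is first transported to the field F_p by the reduction map
   Z_p -> F_p (the relation [reduces]).  Write n = (p-1)/2, g for the residue
   of c, a = g^2 + 1 and b = 1/a.  Since C(2m,m) = (-4)^m C(n,m) mod p, the
   binomial sum is S - 1 where S = sum_k C(n,2k) b^k, and (1+y)^n + (1-y)^n
   = 2S whenever y^2 = b.  The quartic equals (x^2 - a)^2 - a.
   - If b is not a square, the quartic has no root (a would be a square),
     and S = 1 is impossible: in a field F_p(y) with y^2 = b, Frobenius swaps
     u = 1 + y and v = 1 - y, and u^n + v^n = 2 then forces b = 1/2, that
     is g^2 = 1.
   - If b = t^2, a root x satisfies x^2 = a(1 +- t), so the quartic has a root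
     iff u = 1 + t or v = 1 - t is a square; as uv = (gt)^2, by Euler's
     criterion both conditions mean u^n = v^n = 1, which is S = 1.
   Euler's criterion is obtained by adjoining a square root and using that
   the prime field is the set of fixed points of Frobenius. *)

From HB Require Import structures.
From mathcomp Require Import all_boot all_order all_algebra all_field.
From mathcomp Require Import ring.
Import Order.TTheory GRing.Theory Num.Theory.
Set Implicit Arguments. Unset Strict Implicit. Unset Printing Implicit Defensive.
Local Open Scope ring_scope.

Definition quartic (R : nzRingType) (c x : R) : R :=
  x ^+ 4 - 2 * (c ^+ 2 + 1) * x ^+ 2 + c ^+ 2 * (c ^+ 2 + 1).

Definition binom_sum (R : unitRingType) (p : nat) (c : R) : R :=
  \sum_(1 <= k < (p %/ 4).+1) ('C(4 * k, 2 * k))%:R / (16 * (c ^+ 2 + 1)) ^+ k.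

Definition even_binom_sum (R : nzSemiRingType) (n : nat) (b : R) : R :=
  \sum_(k < n./2.+1) ('C(n, k.*2))%:R * b ^+ k.

Lemma quartic_sqr (R : comNzRingType) (c x : R) :
  quartic c x = (x ^+ 2 - (c ^+ 2 + 1)) ^+ 2 - (c ^+ 2 + 1).
Proof. by rewrite /quartic; ring. Qed.

Lemma rmorph_even_binom_sum (R S : nzRingType) (f : {rmorphism R -> S}) n b :
  f (even_binom_sum n b) = even_binom_sum n (f b).
Proof.
rewrite rmorph_sum; apply: eq_bigr => k _.
by rewrite rmorphM rmorph_nat rmorphXn.
Qed.

Lemma sum_pairs (R : nmodType) (F : nat -> R) m :
  \sum_(i < m.*2) F i = \sum_(k < m) (F k.*2 + F k.*2.+1).
Proof.
elim: m => [|m IH]; first by rewrite !big_ord0.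
by rewrite doubleS !big_ord_recr /= IH addrA.
Qed.

(* In (1+y)^n + (1-y)^n the odd powers of y cancel. *)
Lemma binomial_even_part (R : comNzRingType) (y : R) n :
  (1 + y) ^+ n + (1 - y) ^+ n = 2 * even_binom_sum n (y ^+ 2).
Proof.
rewrite [1 + y]addrC [1 - y]addrC !exprD1n -big_split /=.
pose F i := (y ^+ i + (- y) ^+ i) *+ 'C(n, i).
have -> : \sum_(i < n.+1) (y ^+ i *+ 'C(n, i) + (- y) ^+ i *+ 'C(n, i))
          = \sum_(i < n.+1) F i by apply: eq_bigr => i _; rewrite /F mulrnDl.
have n_le : (n.+1 <= (n./2.+1).*2)%N.
  by rewrite doubleS -{1}(odd_double_half n); case: (odd n).
rewrite (big_ord_widen _ F n_le) big_mkcond /=.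
have -> : \sum_(i < (n./2.+1).*2) (if (i < n.+1)%N then F i else 0)
          = \sum_(i < (n./2.+1).*2) F i.
  apply: eq_bigr => i _; case: ifP => // /negbT; rewrite -leqNgt => n_lt_i.
  by rewrite /F bin_small ?mulr0n.
rewrite sum_pairs big_distrr /=; apply: eq_bigr => k _.
rewrite /F -mul2n !(exprS _ (2 * k)) !exprM sqrrN mulNr addrN mul0rn addr0.
by rewrite -mulr_natl; ring.
Qed.

Lemma swap_pow_identity (R : comNzRingType) (u v : R) n :
  u ^+ n.*2.+1 = v -> v ^+ n.*2.+1 = u ->
  u ^+ n + v ^+ n = 2 -> u ^+ n * v ^+ n = -1 -> 4 * (u * v) = (u - v) ^+ 2.
Proof.
rewrite -mul2n mulnC !exprSr !exprM => hu hv hsum hprod.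
transitivity ((u ^+ n + v ^+ n) ^+ 2 * (u * v)); first by rewrite hsum; ring.
transitivity ((u ^+ n) ^+ 2 * u * v + (v ^+ n) ^+ 2 * v * u
              + 2 * (u ^+ n * v ^+ n) * (u * v)); first ring.
by rewrite hu hv hprod; ring.
Qed.

Lemma exists_sqrt_ext (F : finFieldType) (w : F) :
  exists (L : fieldExtType F) (y : L), y ^+ 2 = w%:A.
Proof.
have nz : ('X^2 - w%:P : {poly F}) != 0 by rewrite -size_poly_eq0 size_XnsubC.
have [L [rs Hrs _]] := FinSplittingFieldFor nz.
exists L; have := eqp_size Hrs.
rewrite size_prod_XsubC size_map_poly size_XnsubC //.
case: rs Hrs => [//|y rs] Hrs _; exists y.
have : root (map_poly (in_alg L) ('X^2 - w%:P)) y.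
  by rewrite (eqp_root Hrs) root_prod_XsubC mem_head.
by rewrite rmorphB /= map_polyXn map_polyC /= /root !hornerE subr_eq0 => /eqP.
Qed.

Lemma frobenius_fixed (F : finFieldType) (L : fieldExtType F) (y : L) :
  y ^+ #|F| = y -> exists t : F, y = t%:A.
Proof.
move=> fix_y; have := Fermat's_little_theorem (1%AS : {subfield L}) y.
by rewrite dimv1 expn1 fix_y eqxx => /vlineP [t ->]; exists t.
Qed.

Section Reduction.

Variable p : nat.
Hypothesis p_prime : prime p.

Lemma intr_Fp_eq0 (z : int) : ((z%:~R : 'F_p) == 0) = (p %| `|z|)%N.
Proof.
rewrite {1}[z]intEsign intrM mulf_eq0 rmorphXn rmorphN1 /=.
rewrite expf_eq0 oppr_eq0 oner_eq0 andbF /=.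
by rewrite (dvdn_pcharf (pchar_Fp p_prime)).
Qed.

Definition reduces (x : rat) (y : 'F_p) : Prop := in_Zp_loc p x /\ ratr x = y.

Lemma reduces_frac (m d : int) : ~~ (p %| `|d|)%N ->
  reduces (m%:~R / d%:~R) (m%:~R / d%:~R).
Proof.
rewrite /reduces /in_Zp_loc /ratr; case: divqP => [|k x k_neq0].
  by rewrite dvdn0.
rewrite abszM Euclid_dvdM // negb_or => /andP [pNk pNx]; split=> //.
have k'_neq0 : (k%:~R : 'F_p) != 0 by rewrite intr_Fp_eq0.
by rewrite !intrM invfM mulrACA divff // mul1r.
Qed.

Lemma reduces_den_neq0 (x : rat) : in_Zp_loc p x -> ((denq x)%:~R : 'F_p) != 0.
Proof. by rewrite intr_Fp_eq0. Qed.

Lemma reducesD x y x' y' :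
  reduces x x' -> reduces y y' -> reduces (x + y) (x' + y').
Proof.
move=> [Zx <-] [Zy <-].
have -> : x + y = (numq x * denq y + numq y * denq x)%:~R / (denq x * denq y)%:~R.
  rewrite -{1}[x]divq_num_den -{1}[y]divq_num_den !intrD !intrM.
  by field; rewrite !intr_eq0 !denq_neq0.
have [] := @reduces_frac (numq x * denq y + numq y * denq x) (denq x * denq y).
  by rewrite abszM Euclid_dvdM // negb_or; apply/andP.
move=> Zxy eq_xy; split=> //; rewrite eq_xy /ratr !intrD !intrM.
by field; rewrite !reduces_den_neq0.
Qed.

Lemma reducesM x y x' y' :
  reduces x x' -> reduces y y' -> reduces (x * y) (x' * y').
Proof.
move=> [Zx <-] [Zy <-].
have -> : x * y = (numq x * numq y)%:~R / (denq x * denq y)%:~R.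
  rewrite -{1}[x]divq_num_den -{1}[y]divq_num_den !intrM.
  by field; rewrite !intr_eq0 !denq_neq0.
have [] := @reduces_frac (numq x * numq y) (denq x * denq y).
  by rewrite abszM Euclid_dvdM // negb_or; apply/andP.
move=> Zxy eq_xy; split=> //; rewrite eq_xy /ratr !intrM.
by field; rewrite !reduces_den_neq0.
Qed.

Lemma reducesN x x' : reduces x x' -> reduces (- x) (- x').
Proof.
move=> [Zx <-]; split; first by rewrite /in_Zp_loc denqN.
by rewrite /ratr numqN denqN intrN mulNr.
Qed.

Lemma reduces_int (z : int) : reduces z%:~R z%:~R.
Proof.
split; last by rewrite ratr_int.
rewrite /in_Zp_loc denq_int absz1 dvdn1.
by apply: contraTN (prime_gt1 p_prime) => /eqP ->.
Qed.

Lemma reduces_nat (m : nat) : reduces m%:R m%:R.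
Proof. by have := reduces_int m; rewrite !pmulrn. Qed.

Lemma reducesX x x' k : reduces x x' -> reduces (x ^+ k) (x' ^+ k).
Proof.
move=> red_x; elim: k => [|k IH]; first exact: (reduces_nat 1).
by rewrite !exprS; apply: reducesM.
Qed.

Lemma reducesV x x' : reduces x x' -> x' != 0 -> reduces x^-1 x'^-1.
Proof.
move=> [Zx <-] x'_neq0.
have pNnum : ~~ (p %| `|numq x|)%N.
  rewrite -intr_Fp_eq0; apply: contra x'_neq0 => /eqP num0.
  by rewrite /ratr num0 mul0r.
have -> : x^-1 = (denq x)%:~R / (numq x)%:~R.
  by rewrite -{1}[x]divq_num_den invf_div.
have [Zx' eq_x] := reduces_frac (denq x) pNnum.
by split=> //; rewrite eq_x /ratr invf_div.
Qed.

Lemma reduces_cong0 x x' : reduces x x' -> cong0 p x = (x' == 0).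
Proof.
move=> [Zx <-]; rewrite /cong0 /ratr mulf_eq0 invr_eq0 !intr_Fp_eq0.
by rewrite (negbTE Zx) orbF dvdzE.
Qed.

Lemma reduces_neq0 x x' : reduces x x' -> ~~ cong0 p x -> x' != 0.
Proof. by move/reduces_cong0 ->. Qed.

Lemma reduces_quartic c x c' x' :
  reduces c c' -> reduces x x' -> reduces (quartic c x) (quartic c' x').
Proof.
move=> red_c red_x; have red_a := reducesD (reducesX 2 red_c) (reduces_nat 1).
apply: reducesD; last exact: reducesM (reducesX 2 red_c) red_a.
apply: reducesD (reducesX 4 red_x) (reducesN _).
exact: reducesM (reducesM (reduces_nat 2) red_a) (reducesX 2 red_x).
Qed.

Lemma reduces_binom_sum c c' : reduces c c' -> 16 * (c' ^+ 2 + 1) != 0 ->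
  reduces (binom_sum p c) (binom_sum p c').
Proof.
move=> red_c nz; apply: (big_rec2 reduces); first exact: (reduces_nat 0).
move=> k y y' _ red_y; apply: reducesD red_y; apply: reducesM (reduces_nat _) _.
apply: reducesV; last by rewrite expf_neq0.
have red_a := reducesD (reducesX 2 red_c) (reduces_nat 1).
exact: reducesX (reducesM (reduces_nat 16) red_a).
Qed.

Lemma int_root_reduction c c' : reduces c c' ->
  (exists x : int, cong0 p (quartic c x%:~R)) <->
  exists x' : 'F_p, quartic c' x' = 0.
Proof.
move=> red_c; split=> [[x]|[x' root_x']].
  rewrite (reduces_cong0 (reduces_quartic red_c (reduces_int x))) => /eqP.
  by exists x%:~R.
have red_x' : reduces (nat_of_ord x')%:R x'.
  by rewrite -[X in reduces _ X]natr_Zp; apply: reduces_nat.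
exists (nat_of_ord x'); rewrite -pmulrn.
by rewrite (reduces_cong0 (reduces_quartic red_c red_x')) root_x'.
Qed.

End Reduction.

Lemma central_binomS m :
  (m.+1 * 'C(m.+1.*2, m.+1) = 2 * m.*2.+1 * 'C(m.*2, m))%N.
Proof.
rewrite -mul_bin_diag doubleS /= -mulnA (mul_bin_down m.*2.+1 m) /=.
have -> : (m.*2.+1 - m = m.+1)%N by rewrite -addnn -addSn addnK.
by rewrite mulnA mul2n.
Qed.

Section OddPrime.

Variable p : nat.
Hypotheses (p_prime : prime p) (p_odd : odd p).
Local Notation n := p./2.

Lemma p_double_half : p = n.*2.+1.
Proof. by rewrite -{1}(odd_double_half p) p_odd. Qed.

Lemma two_Fp_neq0 : (2 : 'F_p) != 0.
Proof.
rewrite -(dvdn_pcharf (pchar_Fp p_prime)) dvdn_prime2 //.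
by apply: contraL p_odd => /eqP ->.
Qed.

Lemma fermat (w : 'F_p) : w != 0 -> w ^+ (2 * n) = 1.
Proof.
move=> w_neq0; apply: (mulfI w_neq0); rewrite mulr1 -exprS mul2n -p_double_half.
by rewrite -[X in w ^+ X](card_Fp p_prime) expf_card.
Qed.

Lemma euler_pm1 (w : 'F_p) : w != 0 -> w ^+ n = 1 \/ w ^+ n = -1.
Proof.
move/fermat; rewrite mulnC exprM => /eqP.
by rewrite sqrf_eq1 => /orP [] /eqP; [left | right].
Qed.

(* Euler's criterion, hard half: if w^n = 1 then w is a square.  A square
   root y of w in an extension satisfies y^p = y w^n = y, so it lies in F_p. *)
Lemma euler_square (w : 'F_p) : w ^+ n = 1 -> exists t, t ^+ 2 = w.
Proof.
move=> wn; have [L [y y2]] := exists_sqrt_ext w.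
have /frobenius_fixed [t yt] : y ^+ #|'F_p| = y.
  have -> : #|'F_p| = n.*2.+1 by rewrite card_Fp // -p_double_half.
  rewrite exprS -mul2n exprM y2.
  by rewrite -(rmorphXn (in_alg L)) /= wn scale1r mulr1.
by exists t; apply: (fmorph_inj (in_alg L)); rewrite rmorphXn /= -yt.
Qed.

(* Since 2n = -1 in F_p:  C(2m, m) = (-4)^m C(n, m)  for m <= n. *)
Lemma central_binom_Fp m : (m <= n)%N ->
  ('C(m.*2, m))%:R = (-4) ^+ m * ('C(n, m))%:R :> 'F_p.
Proof.
elim: m => [|m IH] lt_m_n; first by rewrite !bin0 mul1r.
have m1_neq0 : (m.+1)%:R != 0 :> 'F_p.
  rewrite -(dvdn_pcharf (pchar_Fp p_prime)) gtnNdvd // p_double_half ltnS.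
  by rewrite (leq_trans lt_m_n) // -addnn leq_addr.
have p0 : (n.*2.+1)%:R = 0 :> 'F_p by rewrite -p_double_half pchar_Fp_0.
have key (K C : 'F_p) :
    2 * (m.*2.+1)%:R * (K * C) = -4 * K * ((n%:R - m%:R) * C).
  apply/eqP; rewrite -subr_eq0; apply/eqP.
  transitivity (2 * K * C * (n.*2.+1)%:R); last by rewrite p0 mulr0.
  by rewrite -!muln2; ring.
apply: (mulfI m1_neq0); rewrite -natrM central_binomS mulrCA -natrM.
rewrite mul_bin_left !natrM natrB ?(ltnW lt_m_n) // IH ?(ltnW lt_m_n) //.
by rewrite key exprS.
Qed.

Lemma sixteen_Fp_neq0 : (16 : 'F_p) != 0.
Proof. by rewrite (_ : 16 = 2 ^+ 4) ?expf_neq0 ?two_Fp_neq0 // -natrX. Qed.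

Lemma sqr_half_pow (s : 'F_p) : s != 0 -> (s ^+ 2) ^+ n = 1.
Proof. by move=> s_neq0; rewrite -exprM fermat. Qed.

(* In F_p the binomial sum of the theorem is S - 1, S = sum_k C(n,2k) a^-k:
   indeed C(4k, 2k) = 16^k C(n, 2k) and [p/4] = [n/2]. *)
Lemma binom_sum_Fp (g : 'F_p) : g ^+ 2 + 1 != 0 ->
  binom_sum p g = even_binom_sum n (g ^+ 2 + 1)^-1 - 1.
Proof.
move=> a_neq0; rewrite /binom_sum /even_binom_sum.
have -> : (p %/ 4 = n./2)%N by rewrite -!divn2 -divnMA.
rewrite -(big_mkord xpredT (fun k => ('C(n, k.*2))%:R * _ ^+ k)).
rewrite big_ltn // bin0 expr0 mulr1 (addrC 1) addrK.
apply: eq_big_nat => k /andP [_ lt_k].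
have le_2k_n : (k.*2 <= n)%N.
  by rewrite leqNgt -ltn_half_double -leqNgt -ltnS.
have -> : (4 * k = (k.*2).*2)%N by rewrite -!mul2n mulnA.
rewrite mul2n central_binom_Fp // -[k.*2]mul2n exprM sqrrN -natrX exprMn exprVn.
by field; rewrite !expf_neq0 ?sixteen_Fp_neq0.
Qed.

End OddPrime.

Section QuarticModP.

Variables (p : nat) (g : 'F_p).
Hypotheses (p_prime : prime p) (p_odd : odd p).
Hypotheses (g_neq0 : g != 0) (a_neq0 : g ^+ 2 + 1 != 0).
Local Notation n := p./2.
Local Notation a := (g ^+ 2 + 1).
Local Notation b := (g ^+ 2 + 1)^-1.

Lemma b_neq0 : b != 0.
Proof. by rewrite invr_eq0. Qed.

Lemma one_sub_b : 1 - b = g ^+ 2 * b.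
Proof. by field. Qed.

(* If b is not a square then neither is a, so (x^2 - a)^2 - a has no root. *)
Lemma nonresidue_no_root : b ^+ n = -1 -> ~ exists x, quartic g x = 0.
Proof.
move=> bn [x]; rewrite quartic_sqr => /eqP; rewrite subr_eq0 => /eqP a_sqr.
have e_neq0 : x ^+ 2 - a != 0.
  by apply: contra a_neq0 => /eqP e0; rewrite -a_sqr e0 expr0n.
move: bn; rewrite -a_sqr -exprVn sqr_half_pow ?invr_eq0 // => /eqP.
by rewrite -addr_eq0; apply/negP; exact: two_Fp_neq0.
Qed.

(* If b is not a square, S = 1 is impossible unless g^2 = 1: with y^2 = b in
   an extension, Frobenius swaps u = 1 + y and v = 1 - y, and
   [swap_pow_identity] gives 4uv = (u - v)^2, i.e. 4(1 - b) = 4b. *)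
Lemma nonresidue_sum_neq1 :
  g ^+ 2 != 1 -> b ^+ n = -1 -> even_binom_sum n b != 1.
Proof.
move=> g2_neq1 bn; apply: contra g2_neq1 => /eqP S1.
have [L [y y2]] := exists_sqrt_ext b.
have pnat_p : [pchar L].-nat p by rewrite pnatE // pchar_lalg pchar_Fp.
have two_L : (2 : L) != 0.
  by rewrite -(rmorph_nat (in_alg L)) fmorph_eq0 two_Fp_neq0.
have frob (z : L) : z ^+ 2 = b%:A -> z ^+ p = - z.
  move=> z2; have -> : z ^+ p = z ^+ n.*2.+1 by rewrite -(p_double_half p_odd).
  by rewrite exprS -mul2n exprM z2 -(rmorphXn (in_alg L)) /= bn scaleN1r mulrN1.
pose u := 1 + y; pose v := 1 - y.
have frob_u : u ^+ n.*2.+1 = v.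
  by rewrite -(p_double_half p_odd) /u (exprDn_pchar _ _ pnat_p) expr1n frob.
have frob_v : v ^+ n.*2.+1 = u.
  rewrite -(p_double_half p_odd) /v (exprDn_pchar _ _ pnat_p) expr1n.
  by rewrite frob ?opprK ?sqrrN.
have uv : u * v = (g ^+ 2 * b)%:A.
  by rewrite -one_sub_b scalerBl scale1r -y2 /u /v; ring.
have sum_n : u ^+ n + v ^+ n = 2.
  rewrite binomial_even_part y2 -(rmorph_even_binom_sum (in_alg L)) /= S1.
  by rewrite scale1r mulr1.
have prod_n : u ^+ n * v ^+ n = -1.
  rewrite -exprMn uv -(rmorphXn (in_alg L)) /= exprMn -exprM fermat //.
  by rewrite mul1r bn scaleN1r.
have key := swap_pow_identity frob_u frob_v sum_n prod_n.
have : (2 * 2) * (2 * y ^+ 2 - 1) = 0.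
  transitivity ((u - v) ^+ 2 - 4 * (u * v)); first by rewrite /u /v; ring.
  by rewrite key subrr.
move=> /eqP; rewrite !mulf_eq0 (negbTE two_L) /= subr_eq0 y2 => /eqP two_b.
have {}two_b : 2 * b = 1.
  by apply: (fmorph_inj (in_alg L)); rewrite rmorphM rmorph_nat rmorph1 /= two_b.
apply/eqP; apply: (mulIf b_neq0); rewrite mul1r -one_sub_b.
by rewrite -[X in X - _]two_b; ring.
Qed.

Section SquareRoot.

(* From now on b = t^2; put u = 1 + t and v = 1 - t. *)
Variable t : 'F_p.
Hypothesis t2 : t ^+ 2 = b.

Lemma residue_uv : (1 + t) * (1 - t) = (g * t) ^+ 2.
Proof. by rewrite exprMn t2 -one_sub_b -t2; ring. Qed.

Lemma residue_t_neq0 : t != 0.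
Proof. by apply: contraNneq b_neq0 => t0; rewrite -t2 t0 expr0n. Qed.

Lemma residue_uv_neq0 : (1 + t) * (1 - t) != 0.
Proof. by rewrite residue_uv sqrf_eq0 mulf_neq0 ?residue_t_neq0. Qed.

(* As uv is a nonzero square, u^n v^n = 1. *)
Lemma residue_pow : (1 + t) ^+ n * (1 - t) ^+ n = 1.
Proof.
rewrite -exprMn residue_uv sqr_half_pow // -sqrf_eq0 -residue_uv.
exact: residue_uv_neq0.
Qed.

(* 2S = u^n + v^n with u^n = v^n = +-1, so S = 1 iff u^n = 1. *)
Lemma residue_sum_eq1 : even_binom_sum n b = 1 <-> (1 + t) ^+ n = 1.
Proof.
have := binomial_even_part t n; rewrite t2 => sum2.
have two_neq0 := two_Fp_neq0 p_prime p_odd.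
have u_neq0 : 1 + t != 0.
  by move: residue_uv_neq0; rewrite mulf_eq0 negb_or => /andP [].
split=> [S1 | un].
  have [// | un] := euler_pm1 p_prime p_odd u_neq0.
  have vn : (1 - t) ^+ n = -1.
    by move: residue_pow; rewrite un mulN1r => /eqP; rewrite eqr_oppLR => /eqP.
  rewrite S1 in sum2; have : (2 : 'F_p) * 2 = 2 * 1 - (-1 + -1) by ring.
  rewrite -sum2 un vn subrr => /eqP.
  by rewrite mulf_eq0 orbb (negbTE two_neq0).
have vn : (1 - t) ^+ n = 1 by move: residue_pow; rewrite un mul1r.
by apply: (mulfI two_neq0); rewrite -sum2 un vn mulr1.
Qed.

(* With r = 1/t we have a = r^2, and x is a root iff x^2 - a = +-r, i.e.
   (xt)^2 = 1 +- t; so a root exists iff u or v is a square, that is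
   (by Euler's criterion and u^n v^n = 1) iff u^n = 1. *)
Lemma residue_root : (exists x, quartic g x = 0) <-> (1 + t) ^+ n = 1.
Proof.
have t_neq0 := residue_t_neq0.
have a_r : a = t^-1 ^+ 2 by rewrite exprVn t2 invrK.
have [u_neq0 v_neq0] : 1 + t != 0 /\ 1 - t != 0.
  by move: residue_uv_neq0; rewrite mulf_eq0 negb_or => /andP [].
split=> [[x] | un]; last first.
  have [s s2] := euler_square p_prime p_odd un.
  exists (s / t); rewrite quartic_sqr a_r exprMn s2.
  by field.
rewrite quartic_sqr a_r => /eqP; rewrite subr_eq0 eqf_sqr.
case/orP; rewrite subr_eq => /eqP x2.
  have xt2 : (x * t) ^+ 2 = 1 + t by rewrite exprMn x2; field.
  by rewrite -xt2 sqr_half_pow // -sqrf_eq0 xt2.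
have xt2 : (x * t) ^+ 2 = 1 - t by rewrite exprMn x2; field.
have := residue_pow; rewrite -xt2 sqr_half_pow ?mulr1 //.
by rewrite -sqrf_eq0 xt2.
Qed.

End SquareRoot.

Theorem quartic_root_Fp : g != 1 -> g != -1 ->
  (exists x, quartic g x = 0) <-> even_binom_sum n b = 1.
Proof.
move=> g_neq1 g_neqN1.
have [bn | bn] := euler_pm1 p_prime p_odd b_neq0.
  have [t t2] := euler_square p_prime p_odd bn.
  exact: iff_trans (residue_root t2) (iff_sym (residue_sum_eq1 t2)).
have g2_neq1 : g ^+ 2 != 1 by rewrite sqrf_eq1 negb_or g_neq1.
split=> [/(nonresidue_no_root bn) // | S1].
by move: (nonresidue_sum_neq1 g2_neq1 bn); rewrite S1 eqxx.
Qed.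

End QuarticModP.

Theorem corollary2p4 (p : nat) (c : rat) :
  prime p -> odd p -> in_Zp_loc p c ->
  ~~ cong0 p c -> ~~ cong0 p (c - 1) -> ~~ cong0 p (c + 1) ->
  ~~ cong0 p (c ^+ 2 + 1) ->
  (exists x : int,
      cong0 p ((x%:~R : rat) ^+ 4 - 2 * (c ^+ 2 + 1) * (x%:~R) ^+ 2
               + c ^+ 2 * (c ^+ 2 + 1)))
  <->
  cong0 p (\sum_(1 <= k < (p %/ 4).+1)
             ('C(4 * k, 2 * k))%:R / (16 * (c ^+ 2 + 1)) ^+ k).
Proof.
move=> p_prime p_odd c_Zp c_neq0 c_neq1 c_neqN1 a_neq0.
pose g : 'F_p := ratr c; have red_c : reduces c g by [].
have red_1 := reduces_nat p_prime 1.
have red_a := reducesD p_prime (reducesX p_prime 2 red_c) red_1.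
have g_neq0 : g != 0 := reduces_neq0 p_prime red_c c_neq0.
have g_neq1 : g != 1.
  by rewrite -subr_eq0 (reduces_neq0 p_prime (reducesD p_prime red_c (reducesN red_1))).
have g_neqN1 : g != -1.
  by rewrite -addr_eq0 (reduces_neq0 p_prime (reducesD p_prime red_c red_1)).
have a'_neq0 : g ^+ 2 + 1 != 0 := reduces_neq0 p_prime red_a a_neq0.
have red_sum := reduces_binom_sum p_prime red_c
  (mulf_neq0 (sixteen_Fp_neq0 p_prime p_odd) a'_neq0).
change ((exists x : int, cong0 p (quartic c x%:~R)) <-> cong0 p (binom_sum p c)).
rewrite (reduces_cong0 p_prime red_sum) binom_sum_Fp // subr_eq0 -(rwP eqP).
rewrite (int_root_reduction p_prime red_c).
exact: quartic_root_Fp.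
Qed.
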